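(* For all $A\subseteq E$, $\Lambda(A,P)\le\bar\Lambda(A,P)\le(b+1)\cdot\Lambda(A,P)$, where $b=\max_i|E_2\cap p_i|$ is the maximum number of edges that a user path shares with other user paths.
   Context: $G=(V,E)$ is a simple directed acyclic graph with capacities $C\in\mathbb{R}_{\ge0}^E$ and $\gamma$ is a budget with $0<\gamma\le\min_eC(e)$. User paths $P=\{p_1,\dots,p_k\}$ are directed paths (edge sets, not necessarily disjoint) with initial values $\lambda_i\ge0$, $\sum_{i:e\in p_i}\lambda_i\le C(e)$ for all $e$. For $A\subseteq E$ let $\tilde C_A(e)=C(e)-\gamma\mathbf{1}_{\{e\in A\}}$; $T(A,P)$ is the optimal value of: maximize $\sum_i\tilde\lambda_i$ s.t. $\sum_{i:e\in p_i}\tilde\lambda_i\le\tilde C_A(e)$ for all $e$, $0\le\tilde\lambda_i\le\lambda_i$; $\Lambda(A,P)=\sum_i\lambda_i-T(A,P)$. Let $E_1$ be the set of edges lying on exactly one user path and $E_2$ those lying on at least two. Define $\tilde\lambda^{(1)}_{iA}=\min\big(\lambda_i,\min_{e\in p_i\cap E_1}\tilde C_A(e)\big)$, $\tilde\lambda^{(2)}_{iA}=\tilde\lambda^{(1)}_{iA}\cdot\prod_{e\in p_i\cap E_2,\ \tilde C_A(e)\le\sum_{j:e\in p_j}\lambda_j}\frac{\tilde C_A(e)}{\sum_{j:e\in p_j}\lambda_j}$, and $\bar\Lambda(A,P)=\sum_i\lambda_i-\sum_i\tilde\lambda^{(2)}_{iA}$. *)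

From HB Require Import structures.
From mathcomp Require Import all_boot all_order all_algebra.
From mathcomp Require Import boolp classical_sets reals.
Set Implicit Arguments. Unset Strict Implicit. Unset Printing Implicit Defensive.
Import Order.TTheory GRing.Theory Num.Theory.
Local Open Scope ring_scope.
Local Open Scope classical_set_scope.

Section Defs.
Variables (R : realType) (V : finType).
Notation edge := (V * V)%type.

Definition erel (E : {set edge}) : rel V := fun u v => (u, v) \in E.

Definition simple_dag (E : {set edge}) : Prop :=
  (forall v : V, (v, v) \notin E) /\
  (forall (x : V) (s : seq V), path (erel E) x s -> last x s = x -> s = [::]).

Definition is_dipath (E : {set edge}) (p : {set edge}) : Prop :=
  exists (x : V) (s : seq V),
    path (erel E) x s /\ p = finset (fun e : edge => e \in zip (x :: s) s).

Variables (k : nat) (P : 'I_k -> {set edge}).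

Definition Ctil (C : edge -> R) (gamma : R) (A : {set edge}) (e : edge) : R :=
  C e - (if e \in A then gamma else 0).

Definition load (lam : 'I_k -> R) (e : edge) : R := \sum_(j | e \in P j) lam j.

Definition feasible (E : {set edge}) (C : edge -> R) (gamma : R)
    (A : {set edge}) (lam lt : 'I_k -> R) : Prop :=
  (forall e, e \in E -> \sum_(i | e \in P i) lt i <= Ctil C gamma A e) /\
  (forall i, 0 <= lt i <= lam i).

Definition Tval E C gamma A lam : R :=
  sup [set t | exists lt, feasible E C gamma A lam lt /\ t = \sum_i lt i].

Definition Lambda E C gamma A lam : R := \sum_i lam i - Tval E C gamma A lam.

Definition nb_paths (e : edge) : nat := #|[set i | e \in P i]|.
Definition E1 (E : {set edge}) : {set edge} := [set e in E | nb_paths e == 1%N].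
Definition E2 (E : {set edge}) : {set edge} := [set e in E | (2 <= nb_paths e)%N].

Definition lam1 E C gamma A (lam : 'I_k -> R) (i : 'I_k) : R :=
  \big[Num.min/lam i]_(e | (e \in P i) && (e \in E1 E)) Ctil C gamma A e.

Definition lam2 E C gamma A (lam : 'I_k -> R) (i : 'I_k) : R :=
  lam1 E C gamma A lam i *
  \prod_(e | [&& e \in P i, e \in E2 E & Ctil C gamma A e <= load lam e])
     (Ctil C gamma A e / load lam e).

Definition Lambdabar E C gamma A lam : R := \sum_i lam i - \sum_i lam2 E C gamma A lam i.

Definition bmax (E : {set edge}) : nat := \max_(i < k) #|E2 E :&: P i|.

End Defs.

(* The heuristic rates lam2 are feasible, which gives the first inequality.
   For the second, fix any feasible rates lt.  On path i the heuristic loses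
   lam i - lam1 i <= lam i - lt i at its private edges, and, since
   1 - prod x_e <= sum (1 - x_e) for x_e in [0, 1], at most
   lam i * (1 - Ct e / load e) at each shared edge e with Ct e <= load e.
   Summed over the users of e this is load e - Ct e, which feasibility of lt
   bounds by the total loss sum_(i uses e) (lam i - lt i).  Each path meets
   at most b shared edges, so the total heuristic loss is at most (b + 1)
   times the loss of lt; taking the supremum over lt gives the bound on
   Lambda. *)
From Pilot Require Import Defs.
From HB Require Import structures.
From mathcomp Require Import all_boot all_order all_algebra.
From mathcomp Require Import boolp classical_sets reals.
From mathcomp Require Import lra.

Set Implicit Arguments.
Unset Strict Implicit.
Unset Printing Implicit Defensive.
Import Order.TTheory GRing.Theory Num.Theory.
Local Open Scope ring_scope.

Lemma Ctil_ge0 (R : realType) (V : finType) (C : V * V -> R) (gamma : R)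
    (A : {set V * V}) (e : V * V) :
  0 <= gamma -> gamma <= C e -> 0 <= Ctil C gamma A e.
Proof. by move=> g0 gC; rewrite /Ctil; case: (e \in A); lra. Qed.

Lemma one_sub_prodr_le_sum (R : realDomainType) (I : Type) (r : seq I)
    (Q : pred I) (F : I -> R) :
  (forall i, Q i -> 0 <= F i <= 1) ->
  1 - \prod_(i <- r | Q i) F i <= \sum_(i <- r | Q i) (1 - F i).
Proof.
move=> F01; elim: r => [|i r IHr]; first by rewrite !big_nil subrr.
rewrite !big_cons; case: ifP => // Qi.
have /andP[Fi0 Fi1] := F01 i Qi.
have p0 : 0 <= \prod_(j <- r | Q j) F j by apply: prodr_ge0 => j /F01 /andP[].
have p1 : \prod_(j <- r | Q j) F j <= 1 := prodr_ile1 r F01.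
nra.
Qed.

Section Heuristic.
Variables (R : realType) (V : finType) (E : {set V * V}) (C : V * V -> R)
  (gamma : R) (A : {set V * V}) (k : nat) (P : 'I_k -> {set V * V})
  (lam : 'I_k -> R).
Hypothesis Ct_ge0 : forall e, e \in E -> 0 <= Ctil C gamma A e.
Hypothesis lam_ge0 : forall i, 0 <= lam i.

Local Notation Ct := (Ctil C gamma A).
Local Notation ld := (load P lam).
Local Notation feasible := (feasible P E C gamma A lam).
Local Notation lam1 := (lam1 P E C gamma A lam).
Local Notation lam2 := (lam2 P E C gamma A lam).
Local Notation congested e := ((e \in E2 P E) && (Ct e <= ld e)).
Local Notation scale e := (Ct e / ld e).

Lemma load_ge0 e : 0 <= ld e.
Proof. by apply: sumr_ge0 => i _. Qed.

Lemma mem_E2_E e : e \in E2 P E -> e \in E.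
Proof. by rewrite inE => /andP[]. Qed.

Lemma mem_E1_E e : e \in E1 P E -> e \in E.
Proof. by rewrite inE => /andP[]. Qed.

(* [0 / 0 = 0] makes this hold also for an unused edge. *)
Lemma load_mul_scale e : congested e -> ld e * scale e = Ct e.
Proof.
case/andP=> /mem_E2_E /Ct_ge0 Ct0 Ct_ld.
have [ld0|ld_neq0] := eqVneq (ld e) 0; last by rewrite mulrC divfK.
by rewrite ld0 mul0r; apply/eqP; rewrite eq_le Ct0 -ld0 Ct_ld.
Qed.

Lemma scale_itv01 e : congested e -> 0 <= scale e <= 1.
Proof.
case/andP=> /mem_E2_E /Ct_ge0 Ct0 Ct_ld.
have [ld0|ld_neq0] := eqVneq (ld e) 0.
  by rewrite ld0 invr0 mulr0 lexx ler01.
have ld_gt0 : 0 < ld e by rewrite lt0r ld_neq0 load_ge0.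
by rewrite divr_ge0 ?load_ge0 //= ler_pdivrMr // mul1r.
Qed.

Lemma nb_pathsE e : nb_paths P e = #|[set i | e \in P i]|.
Proof. by apply: eq_card => i; rewrite [RHS]inE; exact: asboolb. Qed.

Lemma mem_E1_paths i j e : e \in P i -> e \in E1 P E -> (e \in P j) = (j == i).
Proof.
move=> ePi; rewrite inE nb_pathsE => /andP[_ /cards1P[x Px]].
have /setP/(_ j) := Px; have /setP/(_ i) := Px.
by rewrite !inE ePi => /esym/eqP <-.
Qed.

Lemma sum_paths_E1 (g : 'I_k -> R) i e : e \in P i -> e \in E1 P E ->
  \sum_(j | e \in P j) g j = g i.
Proof.
move=> ePi eE1; rewrite (eq_bigl (pred1 i)) ?big_pred1_eq // => j.
exact: mem_E1_paths.
Qed.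

Lemma lam1_le_lam i : lam1 i <= lam i.
Proof.
by rewrite /Defs.lam1; elim/big_rec: _ => [|e x _ IH]; rewrite ?ge_min ?IH ?orbT.
Qed.

Lemma lam1_ge0 i : 0 <= lam1 i.
Proof.
rewrite /Defs.lam1; elim/big_rec: _ => [|e x /andP[_ /mem_E1_E /Ct_ge0] Ct0 IH].
  exact: lam_ge0.
by rewrite le_min IH Ct0.
Qed.

Lemma lam1_le_Ctil i e : e \in P i -> e \in E1 P E -> lam1 i <= Ct e.
Proof.
move=> ePi eE1; rewrite /Defs.lam1 (bigD1 e) /= ?ePi ?eE1 //.
by rewrite ge_min lexx.
Qed.

Lemma feasible_le_lam1 lt i : feasible lt -> lt i <= lam1 i.
Proof.
case=> lt_cap lt_itv; rewrite /Defs.lam1.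
elim/big_rec: _ => [|e x /andP[ePi eE1] IH]; first by case/andP: (lt_itv i).
rewrite le_min IH andbT.
by have := lt_cap e (mem_E1_E eE1); rewrite (sum_paths_E1 lt ePi eE1).
Qed.

Lemma lam2E i :
  lam2 i = lam1 i * \prod_(e | (e \in P i) && congested e) scale e.
Proof. by []. Qed.

Lemma prod_scale_itv01 (Q : pred (V * V)) :
  (forall e, Q e -> congested e) -> 0 <= \prod_(e | Q e) scale e <= 1.
Proof.
move=> QC; have scale01 e : Q e -> 0 <= scale e <= 1 by move/QC/scale_itv01.
by rewrite prodr_ge0 ?prodr_ile1 // => e /scale01 /andP[].
Qed.

Lemma lam2_itv i : 0 <= lam2 i <= lam1 i.
Proof.
have /andP[p0 p1] : 0 <= \prod_(e | (e \in P i) && congested e) scale e <= 1.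
  by apply: prod_scale_itv01 => e /andP[].
by rewrite lam2E mulr_ge0 ?lam1_ge0 //= ler_piMr ?lam1_ge0.
Qed.

Lemma lam2_le_scale i e : e \in P i -> congested e -> lam2 i <= lam i * scale e.
Proof.
move=> ePi cong; rewrite lam2E (bigD1 e) /= ?ePi ?cong //.
have /andP[s0 _] := scale_itv01 cong.
have /andP[_ q1] :
    0 <= \prod_(f | ((f \in P i) && congested f) && (f != e)) scale f <= 1.
  by apply: prod_scale_itv01 => f /andP[/andP[]].
rewrite mulrCA [_ * scale e]mulrC ler_wpM2l //.
exact: le_trans (ler_piMr (lam1_ge0 i) q1) (lam1_le_lam i).
Qed.

Lemma lam2_le_lam i : lam2 i <= lam i.
Proof. by have /andP[_ /le_trans] := lam2_itv i; apply; apply: lam1_le_lam. Qed.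

Lemma sum_lam2_le_Ctil e : e \in E -> \sum_(j | e \in P j) lam2 j <= Ct e.
Proof.
move=> eE.
have [nb0|nb_gt1|nb1] := ltngtP (nb_paths P e) 1.
- rewrite big_pred0 ?Ct_ge0 // => j.
  move: nb0; rewrite nb_pathsE ltnS leqn0 => /eqP/cards0_eq/setP/(_ j).
  by rewrite !inE.
- have eE2 : e \in E2 P E by rewrite inE eE nb_gt1.
  have [Ct_ld|ld_Ct] := boolP (Ct e <= ld e).
    rewrite -(load_mul_scale (e := e)) ?eE2 // mulr_suml.
    by apply: ler_sum => j ePj; rewrite lam2_le_scale ?eE2.
  rewrite -ltNge in ld_Ct; apply/ltW/(le_lt_trans _ ld_Ct).
  by apply: ler_sum => j _; apply: lam2_le_lam.
- have eE1 : e \in E1 P E by rewrite inE eE nb1.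
  move: nb1; rewrite nb_pathsE => /eqP/cards1P[i /setP/(_ i)].
  rewrite !inE eqxx => ePi; rewrite (sum_paths_E1 _ ePi eE1).
  by have /andP[_ /le_trans] := lam2_itv i; apply; apply: lam1_le_Ctil.
Qed.

Lemma lam2_feasible : feasible lam2.
Proof.
split=> [|i]; first exact: sum_lam2_le_Ctil.
by case/andP: (lam2_itv i) => -> _; rewrite lam2_le_lam.
Qed.

Lemma lam_sub_lam2_le lt i : feasible lt ->
  lam i - lam2 i <=
  (lam i - lt i) + \sum_(e | (e \in P i) && congested e) lam i * (1 - scale e).
Proof.
move=> ft; rewrite lam2E -mulr_sumr.
have /andP[p0 p1] : 0 <= \prod_(e | (e \in P i) && congested e) scale e <= 1.
  by apply: prod_scale_itv01 => e /andP[].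
have : 1 - \prod_(e | (e \in P i) && congested e) scale e <=
         \sum_(e | (e \in P i) && congested e) (1 - scale e).
  by apply: one_sub_prodr_le_sum => e /andP[_ /scale_itv01].
have := feasible_le_lam1 i ft; have := lam1_le_lam i; have := lam1_ge0 i.
move: p0 p1 (lam_ge0 i); set p := \prod_(_ | _) _; set S := \sum_(_ | _) _.
nra.
Qed.

Lemma sum_path_edges (F : 'I_k -> V * V -> R) (Q : pred (V * V)) :
  \sum_i \sum_(e | (e \in P i) && Q e) F i e =
  \sum_(e | Q e) \sum_(i | e \in P i) F i e.
Proof.
rewrite (exchange_big_dep Q) => [|i e _ /andP[]//].
by apply: eq_bigr => e Qe; apply: eq_bigl => i; rewrite Qe andbT.
Qed.

Lemma congested_loss_le lt : feasible lt ->
  \sum_i \sum_(e | (e \in P i) && congested e) lam i * (1 - scale e) <=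
  \sum_i \sum_(e | (e \in P i) && congested e) (lam i - lt i).
Proof.
case=> lt_cap _; rewrite !(sum_path_edges _ (fun e => congested e)).
apply: ler_sum => e cong; rewrite -mulr_suml mulrBr mulr1 load_mul_scale //.
by rewrite sumrB lerD2l lerN2 lt_cap // mem_E2_E //; case/andP: cong.
Qed.

Lemma sum_congested_le_bmax (g : 'I_k -> R) : (forall i, 0 <= g i) ->
  \sum_i \sum_(e | (e \in P i) && congested e) g i <= (bmax P E)%:R * \sum_i g i.
Proof.
move=> g0; rewrite mulr_sumr; apply: ler_sum => i _.
rewrite sumr_const -[_ *+ #|_|]mulr_natl ler_wpM2r // ler_nat.
apply: leq_trans (leq_bigmax i); apply: subset_leq_card.
by apply/fintype.subsetP => e /and3P[ePi eE2 _]; rewrite inE eE2.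
Qed.

Lemma loss_lam2_le lt : feasible lt ->
  \sum_i lam i - \sum_i lam2 i <= (bmax P E).+1%:R * (\sum_i lam i - \sum_i lt i).
Proof.
move=> ft; have [_ lt_itv] := ft.
have loss_ge0 i : 0 <= lam i - lt i by case/andP: (lt_itv i); rewrite subr_ge0.
rewrite -!sumrB (le_trans (ler_sum _ (fun i _ => lam_sub_lam2_le i ft))) //.
rewrite big_split /= addrC mulrSr mulrDl mul1r lerD2r.
exact: le_trans (congested_loss_le ft) (sum_congested_le_bmax loss_ge0).
Qed.

Local Notation Tval := (Tval P E C gamma A lam).

Lemma feasible0 : feasible (fun=> 0).
Proof.
by split=> [e eE|i]; [rewrite big1 ?Ct_ge0 | rewrite lexx lam_ge0].
Qed.

Lemma sum_feasible_le lt : feasible lt -> \sum_i lt i <= \sum_i lam i.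
Proof. by case=> _ lt_itv; apply: ler_sum => i _; case/andP: (lt_itv i). Qed.

Lemma feasible_le_Tval lt : feasible lt -> \sum_i lt i <= Tval.
Proof.
move=> ft; apply: ub_le_sup; last by exists lt.
by exists (\sum_i lam i) => _ [lt' [/sum_feasible_le ? ->]].
Qed.

Lemma Tval_le t : (forall lt, feasible lt -> \sum_i lt i <= t) -> Tval <= t.
Proof.
move=> t_ub; apply: ge_sup => [|_ [lt [/t_ub ? ->]] //].
by exists (\sum_(i < k) 0), (fun=> 0); split; first exact: feasible0.
Qed.

End Heuristic.

Theorem lemma3 (R : realType) (V : finType) (E : {set V * V})
    (C : V * V -> R) (gamma : R) (k : nat) (P : 'I_k -> {set V * V})
    (lam : 'I_k -> R) (A : {set V * V}) :
  simple_dag E ->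
  (forall e, e \in E -> 0 <= C e) ->
  0 < gamma -> (forall e, e \in E -> gamma <= C e) ->
  (forall i, is_dipath E (P i)) ->
  (forall i, 0 <= lam i) ->
  (forall e, e \in E -> load P lam e <= C e) ->
  A \subset E ->
  Lambda P E C gamma A lam <= Lambdabar P E C gamma A lam /\
  Lambdabar P E C gamma A lam <= (bmax P E).+1%:R * Lambda P E C gamma A lam.
Proof.
move=> _ _ gamma_gt0 gamma_le_C _ lam_ge0 _ _.
have Ct_ge0 e : e \in E -> 0 <= Ctil C gamma A e.
  by move=> eE; apply: Ctil_ge0 (ltW gamma_gt0) (gamma_le_C e eE).
rewrite /Lambda /Lambdabar; split.
  by rewrite lerD2l lerN2; apply/feasible_le_Tval/lam2_feasible.
set B := (bmax P E).+1%:R; set X := _ - \sum_i _.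
have B_gt0 : 0 < B :> R by rewrite ltr0n.
suff : Tval P E C gamma A lam <= \sum_i lam i - X / B.
  by rewrite lerBrDr -lerBrDl ler_pdivrMr // mulrC.
apply: Tval_le => // lt ft; rewrite lerBrDr -lerBrDl ler_pdivrMr // mulrC.
exact: loss_lam2_le.
Qed.
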